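(* Let $F=(f^{(1)},f^{(2)},\dots,f^{(j)},\dots)$ be a non-degenerate circular net with a family of spherical curvature lines, where $f^{(j)}$ lies on the sphere $s_j\in\mathbb{P}(\mathcal{L})$, the spheres $s_1,s_2,\dots$ are pairwise distinct, and their representatives are normalized by $\langle \mathfrak{s}_j,\mathfrak{p}\rangle=-1$ for all $j$. Let $\lambda_{12},\lambda_{23},\dots,\lambda_{j,j+1},\dots\in\mathbb{R}$ be arbitrary (folding parameters). Define $\sigma_{12}$ to be the inversion in $$\mathfrak{n}_{12}:=\mathfrak{s}_1+\lambda_{12}\mathfrak{s}_2-(1+\lambda_{12})\mathfrak{p},$$ and recursively, for $j\ge 2$, with $\Phi_j:=\sigma_{j-1,j}\circ\cdots\circ\sigma_{12}$, $\bar{\mathfrak{s}}_j:=\Phi_j(\mathfrak{s}_j)$ and $\hat{\mathfrak{s}}_{j+1}:=\Phi_j(\mathfrak{s}_{j+1})$, let $\sigma_{j,j+1}$ be the inversion in $$\mathfrak{n}_{j,j+1}:=\bar{\mathfrak{s}}_j+\lambda_{j,j+1}\hat{\mathfrak{s}}_{j+1}-(1+\lambda_{j,j+1})\mathfrak{p}.$$ Then the net $$\tilde F:=\big(f^{(1)},\ \sigma_{12}(f^{(2)}),\ \dots,\ \sigma_{k-1,k}\circ\cdots\circ\sigma_{12}(f^{(k)}),\ \dots\big)$$ is again a circular net with a family of spherical curvature lines, the $k$-th curve lying on the sphere $\bar{\mathfrak{s}}_k$ (with $\bar{\mathfrak{s}}_1:=\mathfrak{s}_1$).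
   Context: Light cone model: $\mathbb{R}^{4,2}$ is $\mathbb{R}^6$ with a symmetric bilinear form $\langle\cdot,\cdot\rangle$ of signature $(4,2)$; $\mathcal{L}=\{v:\langle v,v\rangle=0\}$ and $\mathbb{P}(\mathcal{L})$ is its projectivization. A fixed vector $\mathfrak{p}$ (point sphere complex) with $\langle\mathfrak{p},\mathfrak{p}\rangle=-1$ is given; elements $v\in\mathbb{P}(\mathcal{L})$ with $\langle\mathfrak{v},\mathfrak{p}\rangle=0$ represent points of $\mathbb{R}^3\cup\{\infty\}$, the others represent oriented spheres (planes count as spheres). A point lies on a sphere iff their representatives are orthogonal. Fraktur letters denote representatives (homogeneous coordinates). For $\mathfrak{a}$ with $\langle\mathfrak{a},\mathfrak{a}\rangle\neq0$ the inversion in $\mathfrak{a}$ is $\sigma_a(x)=x-\frac{2\langle x,\mathfrak{a}\rangle}{\langle\mathfrak{a},\mathfrak{a}\rangle}\mathfrak{a}$; it is an M-inversion if $\langle\mathfrak{a},\mathfrak{p}\rangle=0$ (M-inversions map points to points and generate the Möbius transformations). Four points are concircular iff their representatives are linearly dependent. A discrete curve is a map $f:\mathcal{V}\to\mathbb{P}(\mathcal{L})$ into points, $\mathcal{V}$ a set of consecutive integers, edges $(ij)$ joining consecutive vertices. Two discrete curves $f,g$ on the same $\mathcal{V}$ form a Ribaucour pair if for every edge $(ij)$ the points $f_i,f_j,g_j,g_i$ are concircular. A circular net with a family of spherical curvature lines is a sequence $(f^{(1)},f^{(2)},\dots)$ of discrete curves on a common vertex set such that consecutive curves form Ribaucour pairs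 and each $f^{(j)}$ lies on a sphere $s_j$ (i.e. $\langle\mathfrak{f}^{(j)}_t,\mathfrak{s}_j\rangle=0$ for all $t$); it is non-degenerate if consecutive curves lie on distinct spheres. The deformation $F\mapsto\tilde F$ is called a lifted-folding and the $\sigma_{j,j+1}$ folding inversions. *)

From HB Require Import structures.
From mathcomp Require Import all_boot all_order all_algebra.
Set Implicit Arguments. Unset Strict Implicit. Unset Printing Implicit Defensive.
Import Order.TTheory GRing.Theory Num.Theory.
Local Open Scope ring_scope.

Section LightCone.
Variable R : realFieldType.
Notation vec := 'rV[R]_6.

Definition lor (x y : vec) : R :=
  \sum_(i < 6) (if (i < 4)%N then 1 else -1) * x ord0 i * y ord0 i.

(* Two representatives define the same element of P(L). *)
Definition proj_eq (u v : vec) : Prop := exists c : R, c != 0 /\ u = c *: v.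

(* Representatives of points and of (oriented) spheres, w.r.t. the point
   sphere complex p. *)
Definition is_point (p x : vec) : Prop := x != 0 /\ lor x x = 0 /\ lor x p = 0.
Definition is_sphere (p x : vec) : Prop := x != 0 /\ lor x x = 0 /\ lor x p != 0.

Definition inversion (a x : vec) : vec := x - ((2 * lor x a) / lor a a) *: a.

Definition concircular (a b c d : vec) : Prop :=
  exists k1 k2 k3 k4 : R,
    [|| k1 != 0, k2 != 0, k3 != 0 | k4 != 0] /\
    k1 *: a + k2 *: b + k3 *: c + k4 *: d = 0.

Definition consecutive (V : int -> Prop) : Prop :=
  forall i j k : int, V i -> V k -> (i <= j <= k)%R -> V j.

Definition discrete_curve (p : vec) (V : int -> Prop) (f : int -> vec) : Prop :=
  forall t, V t -> is_point p (f t).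

Definition ribaucour (V : int -> Prop) (f g : int -> vec) : Prop :=
  forall t : int, V t -> V (t + 1) -> concircular (f t) (f (t + 1)) (g (t + 1)) (g t).

Definition in_net (len : option nat) (j : nat) : bool :=
  (1 <= j)%N && (if len is Some n then (j <= n)%N else true).

Definition circ_net_sph (p : vec) (V : int -> Prop) (len : option nat)
    (F : nat -> int -> vec) (S : nat -> vec) : Prop :=
  (forall j, in_net len j ->
     [/\ discrete_curve p V (F j), is_sphere p (S j) &
         forall t, V t -> lor (F j t) (S j) = 0]) /\
  (forall j, in_net len j -> in_net len j.+1 -> ribaucour V (F j) (F j.+1)).

Definition nondeg_net (len : option nat) (S : nat -> vec) : Prop :=
  forall j, in_net len j -> in_net len j.+1 -> ~ proj_eq (S j) (S j.+1).

(* Phi p s lam j = Phi_j = sigma_{j-1,j} o ... o sigma_{12}  (Phi_1 = id),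
   where lam j = lambda_{j,j+1} and sigma_{j,j+1} is the inversion in
   n_{j,j+1} = Phi_j(s_j) + lam j Phi_j(s_{j+1}) - (1 + lam j) p. *)
Fixpoint Phi (p : vec) (s : nat -> vec) (lam : nat -> R) (j : nat) : vec -> vec :=
  match j with
  | 0 => id
  | 1 => id
  | j'.+1 =>
      let P := Phi p s lam j' in
      inversion (P (s j') + lam j' *: P (s j) - (1 + lam j') *: p) \o P
  end.

End LightCone.

From HB Require Import structures.
From mathcomp Require Import all_boot all_order all_algebra.
From mathcomp Require Import ring zify.
Set Implicit Arguments. Unset Strict Implicit. Unset Printing Implicit Defensive.
Import Order.TTheory GRing.Theory Num.Theory.
Local Open Scope ring_scope.

(* Every folding normal n_{j,j+1} is orthogonal to p, because the spheres are
   normalized by <s_j, p> = -1 and Phi_j fixes p; so every folding inversion is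
   an M-inversion, and each Phi_k is a linear isometry fixing p.  Such maps send
   points to points, spheres to spheres and preserve incidence.  For the
   Ribaucour property of the pair (Phi_j f^(j), sigma (Phi_j f^(j+1))), write the
   linear relation k1 f_t + k2 f_(t+1) + k3 g_(t+1) + k4 g_t = 0; the vector
   w = k3 g_(t+1) + k4 g_t = -(k1 f_t + k2 f_(t+1)) lies on both spheres and is
   orthogonal to p, hence Phi_j w is orthogonal to n_{j,j+1} and fixed by sigma,
   and linearity of sigma transports the relation. *)

Section Lorentz.
Variable R : realFieldType.
Notation vec := 'rV[R]_6.
Implicit Types (p u v w x y z a b c d n : vec) (phi : vec -> vec).

Lemma lorC x y : lor x y = lor y x.
Proof. by apply: eq_bigr => i _; rewrite -mulrA (mulrC (x _ _)) mulrA. Qed.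

Lemma lorDl x y z : lor (x + y) z = lor x z + lor y z.
Proof. by rewrite /lor -big_split; apply: eq_bigr => i _; rewrite !mxE mulrDr mulrDl. Qed.

Lemma lorZl k x z : lor (k *: x) z = k * lor x z.
Proof. by rewrite /lor mulr_sumr; apply: eq_bigr => i _; rewrite mxE; ring. Qed.

Lemma lor0l z : lor 0 z = 0.
Proof. by rewrite -(scale0r 0) lorZl mul0r. Qed.

Lemma lorBl x y z : lor (x - y) z = lor x z - lor y z.
Proof. by rewrite lorDl -scaleN1r lorZl mulN1r. Qed.

Lemma lorDr x y z : lor z (x + y) = lor z x + lor z y.
Proof. by rewrite !(lorC z) lorDl. Qed.

Lemma lorZr k x z : lor z (k *: x) = k * lor z x.
Proof. by rewrite !(lorC z) lorZl. Qed.

Lemma lorBr x y z : lor z (x - y) = lor z x - lor z y.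
Proof. by rewrite !(lorC z) lorBl. Qed.

Record moebius p phi : Prop := Moebius {
  moebiusD : {morph phi : x y / x + y};
  moebiusZ : forall k, {morph phi : x / k *: x};
  moebius_lor : forall x y, lor (phi x) (phi y) = lor x y;
  moebius_eq0 : forall x, phi x = 0 -> x = 0;
  moebius_fix : phi p = p }.

Lemma moebius_id p : moebius p id.
Proof. by split. Qed.

Lemma moebius_comp p phi psi : moebius p phi -> moebius p psi -> moebius p (phi \o psi).
Proof.
move=> [D1 Z1 L1 E1 F1] [D2 Z2 L2 E2 F2]; split.
- by move=> x y /=; rewrite D2 D1.
- by move=> k x /=; rewrite Z2 Z1.
- by move=> x y /=; rewrite L1 L2.
- by move=> x /E1 /E2.
- by rewrite /= F2 F1.
Qed.

Section MoebiusMap.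
Variables (p : vec) (phi : vec -> vec).
Hypothesis phiM : moebius p phi.

Lemma moebius0 : phi 0 = 0.
Proof. by have := moebiusZ phiM 0 0; rewrite !scale0r. Qed.

Lemma moebius_lor_fix x : lor (phi x) p = lor x p.
Proof. by rewrite -{1}(moebius_fix phiM) (moebius_lor phiM). Qed.

Lemma moebius_neq0 x : x != 0 -> phi x != 0.
Proof. by apply: contraNneq => /(moebius_eq0 phiM) ->. Qed.

Lemma moebius_point x : is_point p x -> is_point p (phi x).
Proof.
case=> x0 [xx xp]; split; first exact: moebius_neq0.
by rewrite (moebius_lor phiM) moebius_lor_fix.
Qed.

Lemma moebius_sphere x : is_sphere p x -> is_sphere p (phi x).
Proof.
case=> x0 [xx xp]; split; first exact: moebius_neq0.
by rewrite (moebius_lor phiM) moebius_lor_fix.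
Qed.

Lemma moebius_lin_comb (k1 k2 k3 k4 : R) a b c d :
  phi (k1 *: a + k2 *: b + k3 *: c + k4 *: d) =
  k1 *: phi a + k2 *: phi b + k3 *: phi c + k4 *: phi d.
Proof. by rewrite !(moebiusD phiM) !(moebiusZ phiM). Qed.

Lemma moebius_concircular a b c d :
  concircular a b c d -> concircular (phi a) (phi b) (phi c) (phi d).
Proof.
move=> [k1 [k2 [k3 [k4 [k_nz rel]]]]]; exists k1, k2, k3, k4; split=> //.
by rewrite -moebius_lin_comb rel moebius0.
Qed.

End MoebiusMap.

Lemma inversionD n : {morph inversion n : x y / x + y}.
Proof.
by move=> x y; rewrite /inversion lorDl mulrDr mulrDl scalerDl opprD addrACA.
Qed.

Lemma inversionZ n k : {morph inversion n : x / k *: x}.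
Proof.
move=> x; rewrite /inversion lorZl scalerBr scalerA.
by congr (_ - _ *: _); rewrite !mulrA (mulrC 2).
Qed.

(* The junk value 1/0 = 0 makes a degenerate inversion the identity. *)
Lemma inversion_degenerate n x : lor n n = 0 -> inversion n x = x.
Proof. by move=> nn0; rewrite /inversion nn0 invr0 mulr0 scale0r subr0. Qed.

Lemma inversion_lor n x y : lor (inversion n x) (inversion n y) = lor x y.
Proof.
have [nn0|nn_neq0] := eqVneq (lor n n) 0; first by rewrite !inversion_degenerate.
rewrite /inversion lorBl !lorBr !lorZl !lorZr (lorC n y); by field.
Qed.

Lemma inversion_id n x : lor x n = 0 -> inversion n x = x.
Proof. by move=> xn; rewrite /inversion xn mulr0 mul0r scale0r subr0. Qed.

Lemma inversionK n : involutive (inversion n).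
Proof.
move=> x; have [nn0|nn_neq0] := eqVneq (lor n n) 0; first by rewrite !inversion_degenerate.
rewrite /inversion lorBl lorZl.
have -> : 2 * (lor x n - 2 * lor x n / lor n n * lor n n) / lor n n
          = - (2 * lor x n / lor n n) by field.
by rewrite scaleNr opprK subrK.
Qed.

Lemma inversion_moebius p n : lor n p = 0 -> moebius p (inversion n).
Proof.
move=> np; split.
- exact: inversionD.
- exact: inversionZ.
- exact: inversion_lor.
- by move=> x x0; rewrite -(inversionK n x) x0 inversion_id ?lor0l.
- by rewrite inversion_id // lorC.
Qed.

Lemma concircular_inversion p u v (l m : R) a b c d :
  lor a u = 0 -> lor b u = 0 -> lor c v = 0 -> lor d v = 0 ->
  lor c p = 0 -> lor d p = 0 ->
  concircular a b c d ->
  concircular a b (inversion (u + l *: v - m *: p) c)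
                  (inversion (u + l *: v - m *: p) d).
Proof.
move=> au bu cv dv cp dp [k1 [k2 [k3 [k4 [k_nz rel]]]]].
exists k1, k2, k3, k4; split=> //.
set n := u + l *: v - m *: p; set w := k3 *: c + k4 *: d.
have w_opp : w = - (k1 *: a + k2 *: b) by apply/eqP; rewrite -addr_eq0 addrC addrA rel.
have wu : lor w u = 0 by rewrite w_opp -scaleN1r lorZl lorDl !lorZl au bu; ring.
have wv : lor w v = 0 by rewrite lorDl !lorZl cv dv; ring.
have wp : lor w p = 0 by rewrite lorDl !lorZl cp dp; ring.
have wn : lor w n = 0 by rewrite /n lorBr lorDr !lorZr wu wv wp; ring.
by rewrite -!inversionZ -addrA -inversionD -/w inversion_id // addrA rel.
Qed.

Lemma lor_folding_normal p u v (l : R) :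
  lor p p = -1 -> lor u p = -1 -> lor v p = -1 ->
  lor (u + l *: v - (1 + l) *: p) p = 0.
Proof. by move=> pp up vp; rewrite lorBl lorDl !lorZl pp up vp; ring. Qed.

Lemma PhiSS p s (lam : nat -> R) k :
  Phi p s lam k.+2 =
  inversion (Phi p s lam k.+1 (s k.+1) + lam k.+1 *: Phi p s lam k.+1 (s k.+2)
             - (1 + lam k.+1) *: p) \o Phi p s lam k.+1.
Proof. by []. Qed.

Lemma Phi_moebius p s (lam : nat -> R) k :
  lor p p = -1 -> (forall i, (1 <= i <= k)%N -> lor (s i) p = -1) ->
  moebius p (Phi p s lam k).
Proof.
move=> pp; elim: k => [|[|k] IH] sp; try exact: moebius_id.
have PhiM := IH (fun i hi => sp i ltac:(lia)).
rewrite PhiSS; apply: moebius_comp (PhiM); apply: inversion_moebius.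
by apply: lor_folding_normal; rewrite ?(moebius_lor_fix PhiM) //; apply: sp; lia.
Qed.

Lemma in_net_le len i j : in_net len j -> (1 <= i <= j)%N -> in_net len i.
Proof. by rewrite /in_net; case: len => [n|] /=; lia. Qed.

End Lorentz.

Theorem theorem2p7 (R : realFieldType) (p : 'rV[R]_6) (V : int -> Prop)
    (len : option nat) (F : nat -> int -> 'rV[R]_6) (s : nat -> 'rV[R]_6)
    (lam : nat -> R) :
  lor p p = -1 ->
  consecutive V ->
  circ_net_sph p V len F s ->
  nondeg_net len s ->
  (forall i j, in_net len i -> in_net len j -> i <> j -> ~ proj_eq (s i) (s j)) ->
  (forall j, in_net len j -> lor (s j) p = -1) ->
  circ_net_sph p V len (fun k t => Phi p s lam k (F k t))
                       (fun k => Phi p s lam k (s k)).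
Proof.
move=> pp _ [net_curves net_rib] _ _ sp.
have PhiM j : in_net len j -> moebius p (Phi p s lam j).
  by move=> jn; apply: Phi_moebius => // i ij; apply/sp/(in_net_le jn ij).
split=> [j jn | [//|j] jn j1n t Vt Vt1].
  have [curve sph on_sph] := net_curves j jn; have PhiMj := PhiM j jn.
  split=> [t Vt | | t Vt].
  - exact/(moebius_point PhiMj)/curve.
  - exact: (moebius_sphere PhiMj sph).
  - by rewrite (moebius_lor PhiMj) on_sph.
have [curve _ on_sph] := net_curves _ jn; have [curve1 _ on_sph1] := net_curves _ j1n.
have PhiMj := PhiM _ jn; rewrite PhiSS /=.
apply: concircular_inversion; rewrite ?(moebius_lor PhiMj) ?moebius_lor_fix //.
- by rewrite on_sph.
- by rewrite on_sph.
- by rewrite on_sph1.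
- by rewrite on_sph1.
- by have [_ []] := curve1 _ Vt1.
- by have [_ []] := curve1 _ Vt.
- exact/(moebius_concircular PhiMj)/net_rib.
Qed.
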